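(* Let $K\ge 2$ and let $L_1,\dots,L_K:\mathbb{R}^m\to\mathbb{R}$ be differentiable loss functions, and set $L_0=\frac1K\sum_{i=1}^K L_i$. Assume that for every $i\in\{0,1,\dots,K\}$ the gradient $\nabla L_i$ is $H$-Lipschitz, i.e. $\|\nabla L_i(x)-\nabla L_i(y)\|\le H\|x-y\|$ for all $x,y\in\mathbb{R}^m$, where $0<H<\infty$, and assume $L_0^*=\inf_{\theta\in\mathbb{R}^m}L_0(\theta)>-\infty$. Fix a step size $\alpha$ with $0<\alpha\le 1/H$ and a constant $c\ge 0$, and let $(\theta_t)_{t\ge 0}$ be generated by the CAGrad algorithm described in the context. Then: (1) If $c\ge 1$, every fixed point of CAGrad (i.e. every $\theta$ at which the CAGrad update direction vanishes) is a Pareto-stationary point of $(L_0,L_1,\dots,L_K)$. (2) If $0\le c<1$, then for every $T\ge 0$, $$\sum_{t=0}^T\|\nabla L_0(\theta_t)\|^2\le \frac{2\,(L_0(\theta_0)-L_0^* )}{\alpha(1-c^2)}.$$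
   Context: CAGrad (Conflict-Averse Gradient descent) algorithm: given an initial $\theta_0\in\mathbb{R}^m$, a constant $c\ge0$ and step size $\alpha>0$, at step $t\ge1$ let $g_0=\frac1K\sum_{i=1}^K\nabla L_i(\theta_{t-1})$ and $\phi=c^2\|g_0\|^2$. Let $\mathcal W=\{w\in\mathbb{R}^K: w_i\ge0,\ \sum_i w_i=1\}$ be the probability simplex, and for $w\in\mathcal W$ let $g_w=\frac1K\sum_{i=1}^K w_i\nabla L_i(\theta_{t-1})$. Let $w$ be a minimizer over $\mathcal W$ of $F(w)=g_w^\top g_0+\sqrt{\phi}\,\|g_w\|$, and update $\theta_t=\theta_{t-1}-\alpha\big(g_0+\frac{\phi^{1/2}}{\|g_w\|}g_w\big)$. (This update direction is the solution $d$ of $\max_{d\in\mathbb{R}^m}\min_{i\in[K]}\langle\nabla L_i(\theta_{t-1}),d\rangle$ subject to $\|d-g_0\|\le c\|g_0\|$.) Pareto-stationarity: for differentiable functions $F_1,\dots,F_N$ on $\mathbb{R}^m$, a point $\theta$ is Pareto-stationary if $\min_{w\in\Delta_N}\|\sum_{j=1}^N w_j\nabla F_j(\theta)\|=0$, where $\Delta_N$ is the probability simplex in $\mathbb{R}^N$. *)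

From HB Require Import structures.
From mathcomp Require Import all_boot all_order all_algebra.
From mathcomp Require Import all_classical all_reals all_analysis.
Set Implicit Arguments. Unset Strict Implicit. Unset Printing Implicit Defensive.
Import Order.TTheory GRing.Theory Num.Theory.
Import numFieldNormedType.Exports.
Local Open Scope ring_scope.

Section CAGradDefs.
Variables (R : realType) (m : nat).

Definition dotv (u v : 'rV[R]_m) : R := \sum_(j < m) u 0 j * v 0 j.
Definition enorm (v : 'rV[R]_m) : R := Num.sqrt (\sum_(j < m) v 0 j ^+ 2).

Definition grad (f : 'rV[R]_m -> R) (x : 'rV[R]_m) : 'rV[R]_m :=
  \row_(j < m) 'D_(delta_mx 0 j) f x.

Definition simplex (N : nat) (w : 'I_N -> R) : Prop :=
  (forall i, 0 <= w i) /\ \sum_(i < N) w i = 1.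

Definition pareto_stationary (N : nat) (F : 'I_N -> 'rV[R]_m -> R)
    (theta : 'rV[R]_m) : Prop :=
  exists w : 'I_N -> R, simplex w /\
    enorm (\sum_(j < N) w j *: grad (F j) theta) = 0.

Variable K : nat.
Implicit Types (L : 'I_K -> 'rV[R]_m -> R) (w : 'I_K -> R) (theta : 'rV[R]_m).

Definition avg_loss L : 'rV[R]_m -> R := fun x => K%:R^-1 * \sum_(i < K) L i x.

Definition cag_g0 L theta : 'rV[R]_m :=
  K%:R^-1 *: \sum_(i < K) grad (L i) theta.

Definition cag_gw L w theta : 'rV[R]_m :=
  K%:R^-1 *: \sum_(i < K) w i *: grad (L i) theta.

Definition cag_phi L (c : R) theta : R := c ^+ 2 * enorm (cag_g0 L theta) ^+ 2.

Definition cag_obj L (c : R) theta w : R :=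
  dotv (cag_gw L w theta) (cag_g0 L theta)
  + Num.sqrt (cag_phi L c theta) * enorm (cag_gw L w theta).

Definition cag_weight L (c : R) theta w : Prop :=
  simplex w /\ forall w', simplex w' -> cag_obj L c theta w <= cag_obj L c theta w'.

(* CAGrad update direction  g0 + phi^{1/2}/||g_w|| g_w  (x/0 = 0 convention) *)
Definition cag_dir L (c : R) theta w : 'rV[R]_m :=
  cag_g0 L theta
  + (Num.sqrt (cag_phi L c theta) / enorm (cag_gw L w theta)) *: cag_gw L w theta.

Definition cagrad_seq L (c alpha : R) (theta : nat -> 'rV[R]_m) : Prop :=
  forall t : nat, exists w, cag_weight L c (theta t) w /\
    theta t.+1 = theta t - alpha *: cag_dir L c (theta t) w.

(* the family (L_0, L_1, ..., L_K) indexed by 'I_K.+1 *)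
Definition all_losses L : 'I_K.+1 -> 'rV[R]_m -> R :=
  fun j => match unlift ord0 j with None => avg_loss L | Some i => L i end.

End CAGradDefs.

(* If the CAGrad direction d = g0 + (sqrt phi / |g_w|) g_w vanishes, then
   0 = grad L_0 + nu * sum_i w_i grad L_i with nu >= 0, a conic combination of
   the gradients of L_0, ..., L_K; normalizing its coefficients exhibits Pareto
   stationarity.
   The correction term of d has norm at most c |g0|, so d is an inexact
   gradient of L_0 with relative error c.  For an H-smooth function and a step
   alpha <= 1/H the descent lemma then gives
   L_0 (theta_{t+1}) <= L_0 (theta_t) - alpha (1 - c^2) / 2 * |grad L_0 (theta_t)|^2,
   and these bounds telescope against inf L_0. *)

From HB Require Import structures.
From mathcomp Require Import all_boot all_order all_algebra.
From mathcomp Require Import all_classical all_reals all_analysis.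
From mathcomp Require Import ring lra.
Set Implicit Arguments. Unset Strict Implicit. Unset Printing Implicit Defensive.
Import Order.TTheory GRing.Theory Num.Theory.
Import numFieldNormedType.Exports.
Local Open Scope ring_scope.

Section EuclideanSpace.
Variables (R : realType) (m : nat).
Implicit Types (a : R) (u v w : 'rV[R]_m).

Lemma dotvC u v : dotv u v = dotv v u.
Proof. by apply: eq_bigr => j _; rewrite mulrC. Qed.

Lemma dotvDl u v w : dotv (u + v) w = dotv u w + dotv v w.
Proof. by rewrite /dotv -big_split; apply: eq_bigr => j _; rewrite !mxE mulrDl. Qed.

Lemma dotvZl a u v : dotv (a *: u) v = a * dotv u v.
Proof. by rewrite /dotv mulr_sumr; apply: eq_bigr => j _; rewrite !mxE mulrA. Qed.

Lemma dotvNl u v : dotv (- u) v = - dotv u v.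
Proof. by rewrite -scaleN1r dotvZl mulN1r. Qed.

Lemma dotvBl u v w : dotv (u - v) w = dotv u w - dotv v w.
Proof. by rewrite dotvDl dotvNl. Qed.

Lemma dotvDr u v w : dotv u (v + w) = dotv u v + dotv u w.
Proof. by rewrite !(dotvC u) dotvDl. Qed.

Lemma dotvZr a u v : dotv u (a *: v) = a * dotv u v.
Proof. by rewrite !(dotvC u) dotvZl. Qed.

Lemma dotvNr u v : dotv u (- v) = - dotv u v.
Proof. by rewrite !(dotvC u) dotvNl. Qed.

Lemma dotvBr u v w : dotv u (v - w) = dotv u v - dotv u w.
Proof. by rewrite dotvDr dotvNr. Qed.

Lemma dotvvE u : dotv u u = \sum_(j < m) u 0 j ^+ 2.
Proof. by apply: eq_bigr => j _; rewrite expr2. Qed.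

Lemma dotvv_ge0 u : 0 <= dotv u u.
Proof. by rewrite dotvvE sumr_ge0 // => j _; rewrite sqr_ge0. Qed.

Lemma dotvv_eq0 u : (dotv u u == 0) = (u == 0).
Proof.
apply/idP/eqP => [|->]; last by rewrite dotvvE big1 // => j _; rewrite mxE expr0n.
rewrite dotvvE psumr_eq0 => [/allP u0|j _]; last exact: sqr_ge0.
apply/rowP => j; rewrite mxE; apply/eqP; rewrite -sqrf_eq0.
by have /implyP := u0 j (mem_index_enum _); apply.
Qed.

Lemma enormE u : enorm u = Num.sqrt (dotv u u).
Proof. by rewrite dotvvE. Qed.

Lemma enorm_ge0 u : 0 <= enorm u.
Proof. exact: sqrtr_ge0. Qed.

Lemma enorm_sqr u : enorm u ^+ 2 = dotv u u.
Proof. by rewrite enormE sqr_sqrtr ?dotvv_ge0. Qed.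

Lemma enorm0 : enorm (0 : 'rV[R]_m) = 0.
Proof. by rewrite /enorm big1 ?sqrtr0 // => j _; rewrite mxE expr0n. Qed.

Lemma enorm_eq0 u : (enorm u == 0) = (u == 0).
Proof. by rewrite -dotvv_eq0 -enorm_sqr sqrf_eq0. Qed.

Lemma enormZ a u : enorm (a *: u) = `|a| * enorm u.
Proof. by rewrite !enormE dotvZl dotvZr mulrA -expr2 sqrtrM ?sqr_ge0 // sqrtr_sqr. Qed.

Lemma enormN u : enorm (- u) = enorm u.
Proof. by rewrite -scaleN1r enormZ normrN1 mul1r. Qed.

Lemma enormB_sqr u v :
  enorm (u - v) ^+ 2 = enorm u ^+ 2 - dotv u v *+ 2 + enorm v ^+ 2.
Proof. by rewrite !enorm_sqr !(dotvBl, dotvBr) (dotvC v u); ring. Qed.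

Lemma CauchySchwarz_dotv u v : dotv u v <= enorm u * enorm v.
Proof.
have [->|u0] := eqVneq u 0.
  by rewrite enorm0 mul0r /dotv big1 // => j _; rewrite mxE mul0r.
have [->|v0] := eqVneq v 0.
  by rewrite enorm0 mulr0 /dotv big1 // => j _; rewrite mxE mulr0.
have a_gt0 : 0 < enorm u by rewrite lt_def enorm_eq0 u0 enorm_ge0.
have b_gt0 : 0 < enorm v by rewrite lt_def enorm_eq0 v0 enorm_ge0.
(* |b u - a v|^2 = 2 a b (a b - <u, v>) for a = |u|, b = |v| *)
have := dotvv_ge0 (enorm v *: u - enorm u *: v).
rewrite !(dotvBl, dotvBr, dotvZl, dotvZr) -!enorm_sqr (dotvC v u).
move=> h; rewrite -subr_ge0 -(pmulr_rge0 _ (mulr_gt0 a_gt0 b_gt0)).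
by rewrite -(pmulr_rge0 _ (ltr0Sn R 1)); congr (_ <= _): h; ring.
Qed.

End EuclideanSpace.

Section SmoothFunction.
Variables (R : realType) (m : nat) (f : 'rV[R]_m -> R).
Implicit Types (x v : 'rV[R]_m).

Lemma deriveE_grad x v : differentiable f x -> 'D_v f x = dotv (grad f x) v.
Proof.
move=> df; rewrite deriveE // {1}(row_sum_delta v) linear_sum /dotv.
by apply: eq_bigr => j _; rewrite linearZ /= mxE -deriveE // mulrC.
Qed.

Lemma is_derive_line x v (s : R) : differentiable f (x + s *: v) ->
  is_derive s 1 (fun r : R => f (x + r *: v)) (dotv (grad f (x + s *: v)) v).
Proof.
move=> df; pose g r := f (x + r *: v).
have quotE : (fun h : R => h^-1 *: ((g \o shift s) (h *: 1) - g s)) =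
    (fun h => h^-1 *: ((f \o shift (x + s *: v)) (h *: v) - f (x + s *: v))).
  apply/funext => h /=; rewrite /g; congr (_ *: (f _ - _)).
  by rewrite -[h *: 1]/(h * 1) mulr1 scalerDl addrCA.
apply: DeriveDef; first by rewrite /derivable quotE; exact: diff_derivable.
by rewrite /derive quotE -/(derive f _ v) deriveE_grad.
Qed.

Variable H : R.
Hypothesis f_diff : forall x, differentiable f x.
Hypothesis grad_lip : forall x y, enorm (grad f x - grad f y) <= H * enorm (x - y).

Lemma dotv_grad_line_le x v (s : R) : 0 <= s ->
  dotv (grad f (x + s *: v) - grad f x) v <= H * s * enorm v ^+ 2.
Proof.
move=> s_ge0; apply: le_trans (CauchySchwarz_dotv _ _) _.
have := grad_lip (x + s *: v) x; rewrite addrAC subrr add0r enormZ ger0_norm //.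
rewrite [H * s * _](_ : _ = H * (s * enorm v) * enorm v); last by ring.
exact/ler_wpM2r/enorm_ge0.
Qed.

Lemma descent_lemma x v (a : R) : 0 <= a ->
  f (x + a *: v) <= f x + a * dotv (grad f x) v + H / 2 * a ^+ 2 * enorm v ^+ 2.
Proof.
move=> a_ge0; set d0 := dotv (grad f x) v; set k := H / 2 * enorm v ^+ 2.
(* h has a nonpositive derivative on [0, a], so the mean value theorem gives h a <= h 0 *)
pose h : R -> R := (fun r : R => f (x + r *: v)) - d0 \*: (@id R) - k \*: (@id R) ^+ 2.
have h_deriv (r : R) : is_derive r (1 : R) h
    (dotv (grad f (x + r *: v)) v - d0 *: 1 - k *: ((2%:R * id r ^+ 2.-1) *: 1)).
  have line_deriv := is_derive_line (f_diff (x + r *: v)); exact: is_deriveB.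
have h_cont : {within `[0, a], continuous h}%classic.
  apply: derivable_within_continuous => r _.
  exact: (@ex_derive _ _ _ _ _ _ _ (h_deriv r)).
have [r /andP[r_ge0 _] /= hE] := MVT_segment a_ge0 (fun r _ => h_deriv r) h_cont.
rewrite bnd_simp in r_ge0.
have slope_le0 : dotv (grad f (x + r *: v)) v - d0 - k * (2 * r) <= 0.
  have -> : k * (2 * r) = H * r * enorm v ^+ 2 by rewrite /k; field.
  by have := dotv_grad_line_le x v r_ge0; rewrite dotvBl -/d0; lra.
have scaleE (p q : R) : p *: q = p * q by [].
move: hE; rewrite /h !fctE /= !scaleE scale0r addr0 expr1 !mulr1 subr0.
have := mulr_le0_ge0 slope_le0 a_ge0; rewrite /k; nra.
Qed.

Lemma descent_inexact_grad x d (alpha c : R) :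
  0 <= alpha -> alpha * H <= 1 ->
  enorm (d - grad f x) <= c * enorm (grad f x) ->
  alpha / 2 * (1 - c ^+ 2) * enorm (grad f x) ^+ 2 <= f x - f (x - alpha *: d).
Proof.
move=> alpha_ge0 alphaH d_close; set g := grad f x.
(* - alpha <g, d> + alpha / 2 |d|^2 = alpha / 2 (|d - g|^2 - |g|^2) *)
have := descent_lemma x (- d) alpha_ge0.
rewrite scalerN dotvNr enormN -/g.
have dg_sqr : enorm (d - g) ^+ 2 <= c ^+ 2 * enorm g ^+ 2.
  rewrite -exprMn lerXn2r // nnegrE ?enorm_ge0 //.
  exact: le_trans (enorm_ge0 _) d_close.
have step_small : H / 2 * alpha ^+ 2 * enorm d ^+ 2 <= alpha / 2 * enorm d ^+ 2.
  rewrite -subr_ge0 [X in 0 <= X](_ : _ = alpha / 2 * enorm d ^+ 2 * (1 - alpha * H)).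
    by rewrite mulr_ge0 ?subr_ge0 // mulr_ge0 ?sqr_ge0 // divr_ge0.
  ring.
move: dg_sqr; rewrite enormB_sqr (dotvC d g); nra.
Qed.

End SmoothFunction.

Lemma ler_sum_telescope (R : numDomainType) (a : R) (u F : nat -> R) (T : nat) :
  (forall t, a * u t <= F t - F t.+1) -> a * \sum_(t < T) u t <= F 0%N - F T.
Proof.
move=> uF; have -> : F 0%N - F T = \sum_(t < T) (F t - F t.+1).
  rewrite -(big_mkord xpredT (fun t => F t - F t.+1)).
  by rewrite (telescope_sumr_eq (fun t => - F t)) // => [|t _]; rewrite opprK addrC.
by rewrite mulr_sumr; apply: ler_sum => t _.
Qed.

Lemma pareto_stationary_conic (R : realType) (m N : nat)
    (F : 'I_N -> 'rV[R]_m -> R) (x : 'rV[R]_m) (v : 'I_N -> R) :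
  (forall j, 0 <= v j) -> 0 < \sum_j v j ->
  \sum_j v j *: grad (F j) x = 0 -> pareto_stationary F x.
Proof.
move=> v_ge0 sum_gt0 comb0; set S := \sum_j v j in sum_gt0.
exists (fun j => v j / S); split; first split.
- by move=> j; rewrite divr_ge0 // ltW.
- by rewrite -mulr_suml divff // gt_eqF.
- rewrite (eq_bigr (fun j => S^-1 *: (v j *: grad (F j) x))) => [|j _].
    by rewrite -scaler_sumr comb0 scaler0 enorm0.
  by rewrite scalerA mulrC.
Qed.

Section CAGrad.
Variables (R : realType) (m K : nat) (L : 'I_K -> 'rV[R]_m -> R).
Hypothesis L_diff : forall i x, differentiable (L i) x.
Implicit Types (x : 'rV[R]_m) (w : 'I_K -> R) (c : R).

Lemma avg_lossE : avg_loss L = K%:R^-1 *: \sum_(i < K) L i.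
Proof. by apply/funext => x; rewrite /avg_loss fct_sumE. Qed.

Lemma differentiable_avg_loss x : differentiable (avg_loss L) x.
Proof. by rewrite avg_lossE; apply/differentiableZ/differentiable_sum. Qed.

Lemma grad_avg_loss x : grad (avg_loss L) x = cag_g0 L x.
Proof.
have L_derivable i v : derivable (L i) x v by exact: diff_derivable.
apply/rowP => j; rewrite /cag_g0 !mxE avg_lossE deriveZ ?derive_sum //.
  by rewrite summxE; congr (_ *: _); apply: eq_bigr => i _; rewrite mxE.
exact: derivable_sum.
Qed.

Lemma enorm_cag_dir_sub_g0 c x w : 0 <= c ->
  enorm (cag_dir L c x w - cag_g0 L x) <= c * enorm (cag_g0 L x).
Proof.
move=> c_ge0; rewrite /cag_dir addrAC subrr add0r enormZ.
have sqrt_phi : Num.sqrt (cag_phi L c x) = c * enorm (cag_g0 L x).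
  by rewrite /cag_phi -exprMn sqrtr_sqr ger0_norm // mulr_ge0 ?enorm_ge0.
have [->|gw_neq0] := eqVneq (enorm (cag_gw L w x)) 0.
  by rewrite mulr0 mulr_ge0 ?enorm_ge0.
by rewrite ger0_norm ?divr_ge0 ?sqrtr_ge0 ?enorm_ge0 // divfK // sqrt_phi.
Qed.

Lemma cag_dir_eq0_pareto_stationary c x w :
  simplex w -> cag_dir L c x w = 0 -> pareto_stationary (all_losses L) x.
Proof.
move=> [w_ge0 w_sum] dir0.
set nu := Num.sqrt (cag_phi L c x) / enorm (cag_gw L w x) / K%:R.
have nu_ge0 : 0 <= nu by rewrite !divr_ge0 ?sqrtr_ge0 ?enorm_ge0.
(* cag_dir L c x w = grad L_0 + nu * sum_i w_i grad L_i *)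
apply: (pareto_stationary_conic
  (v := fun j => if unlift ord0 j is Some i then nu * w i else 1)).
- by move=> j; case: unlift => [i|] //; rewrite mulr_ge0.
- rewrite big_ord_recl unlift_none; under eq_bigr do rewrite liftK.
  by rewrite -mulr_sumr w_sum mulr1 ltr_pwDl.
- rewrite big_ord_recl /all_losses unlift_none scale1r grad_avg_loss.
  under eq_bigr do rewrite liftK.
  apply: etrans dir0; rewrite /cag_dir /cag_gw scalerA scaler_sumr; congr (_ + _).
  by apply: eq_bigr => i _; rewrite scalerA.
Qed.

End CAGrad.

Theorem theorem1 (R : realType) (m K : nat) (L : 'I_K -> 'rV[R]_m -> R)
    (H alpha c : R) (theta : nat -> 'rV[R]_m) :
  (2 <= K)%N ->
  (forall i x, differentiable (L i) x) ->
  0 < H ->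
  (forall (j : 'I_K.+1) (x y : 'rV[R]_m),
      enorm (grad (all_losses L j) x - grad (all_losses L j) y) <= H * enorm (x - y)) ->
  has_lbound (range (avg_loss L)) ->
  0 < alpha -> alpha <= H^-1 ->
  0 <= c ->
  cagrad_seq L c alpha theta ->
  (1 <= c ->
     forall (x : 'rV[R]_m) (w : 'I_K -> R),
       cag_weight L c x w -> cag_dir L c x w = 0 ->
       pareto_stationary (all_losses L) x)
  /\
  (c < 1 ->
     forall T : nat,
       \sum_(t < T.+1) enorm (grad (avg_loss L) (theta t)) ^+ 2
       <= 2 * (avg_loss L (theta 0%N) - inf (range (avg_loss L)))
          / (alpha * (1 - c ^+ 2))).
Proof.
move=> _ L_diff H_gt0 grad_lip L0_lbound alpha_gt0 alpha_le c_ge0 theta_seq.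
split.
  by move=> _ x w [w_simplex _]; exact: cag_dir_eq0_pareto_stationary.
move=> c_lt1 T.
set L0 := avg_loss L.
have L0_lip x y : enorm (grad L0 x - grad L0 y) <= H * enorm (x - y).
  by have := grad_lip ord0 x y; rewrite /all_losses unlift_none.
have alphaH : alpha * H <= 1 by rewrite -ler_pdivlMr // div1r.
have L0_decrease t : alpha / 2 * (1 - c ^+ 2) * enorm (grad L0 (theta t)) ^+ 2
    <= L0 (theta t) - L0 (theta t.+1).
  have [w [_ ->]] := theta_seq t.
  apply: descent_inexact_grad (ltW alpha_gt0) alphaH _ => //.
    exact: differentiable_avg_loss.
  by rewrite grad_avg_loss // enorm_cag_dir_sub_g0.
have inf_le : inf (range L0) <= L0 (theta T.+1).
  by apply: (ge_inf L0_lbound); exists (theta T.+1).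
have one_sub_c2_gt0 : 0 < 1 - c ^+ 2 by rewrite subr_gt0 expr_lt1.
have := ler_sum_telescope T.+1 L0_decrease.
rewrite ler_pdivlMr ?mulr_gt0 //; nra.
Qed.
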